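(* Let $n\geq 1$ and $s\geq 1$ be integers. Let $G$ be a connected graph on $n+s$ vertices and let $S\subseteq V(G)$ with $|S|=s$. If every non-terminal level with respect to $S$ contains at least $3$ vertices, then \[ \sigma(S)\leq \frac{1}{6}\left(n^2+3n+2\right). \]
   Context: For a connected graph $G$ and $\emptyset\neq S\subseteq V(G)$, $d_G(S,u)=\min\{d_G(u,v): v\in S\}$, and the status of $S$ is $\sigma(S)=\sigma_G(S)=\sum_{u\in V(G)} d_G(S,u)$. For $i\geq 1$, the $i$-th level with respect to $S$ is the set of vertices $u$ with $d_G(S,u)=i$. The terminal level is the nonempty level with the largest index $i$; the non-terminal levels are all levels $1,\dots,r$ preceding the terminal level $r+1$ (all of which are nonempty by connectivity). *)

From mathcomp Require Import all_boot.
Set Implicit Arguments. Unset Strict Implicit. Unset Printing Implicit Defensive.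

(* A simple graph: vertex set a finType T, edge relation e : rel T
   (assumed symmetric and irreflexive in the theorem). *)

Fixpoint walkn (T : finType) (e : rel T) (k : nat) (u v : T) : bool :=
  if k is k'.+1 then [exists w, e u w && walkn e k' w v] else u == v.

Definition connected_graph (T : finType) (e : rel T) : Prop :=
  forall u v : T, exists k, walkn e k u v.

(* Search over 0..#|T|-1 (shortest walks in a
   connected graph have length < #|T|); returns #|T| if none found. *)
Definition distS (T : finType) (e : rel T) (S : {set T}) (u : T) : nat :=
  find (fun k => [exists v in S, walkn e k v u]) (iota 0 #|T|).

Definition status (T : finType) (e : rel T) (S : {set T}) : nat :=
  \sum_(u : T) distS e S u.

Definition level (T : finType) (e : rel T) (S : {set T}) (i : nat) : {set T} :=
  [set u | distS e S u == i].

(* index of the terminal level (largest i with nonempty level) *)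
Definition ecc (T : finType) (e : rel T) (S : {set T}) : nat :=
  \max_(u : T) distS e S u.

From mathcomp Require Import all_boot zify.

(* Grouping vertices by level, with c_i the size of level i+1, gives
   sigma(S) = sum_i (i+1) c_i and n = sum_i c_i.  When every level but the
   last has at least 3 vertices, 6 sum_i (i+1) c_i <= (n+1)(n+2) follows by
   induction on the number of levels: prepending a level of size c >= 3 adds
   6(c + N) to the left and c(c + 2N + 3) >= 6(c + N) to the right, while a
   single level of size c gives 6c <= (c+1)(c+2). *)

Lemma weighted_sum_bound (c : nat -> nat) (E : nat) :
  (forall i, i.+1 < E -> 3 <= c i) ->
  6 * (\sum_(0 <= i < E) i.+1 * c i) <=
  (\sum_(0 <= i < E) c i + 1) * (\sum_(0 <= i < E) c i + 2).
Proof.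
elim: E c => [|E IH] c c_ge3; first by rewrite !big_geq.
rewrite !big_nat_recl //=.
have -> : \sum_(0 <= i < E) i.+2 * c i.+1 =
          \sum_(0 <= i < E) c i.+1 + \sum_(0 <= i < E) i.+1 * c i.+1.
  by rewrite -big_split; apply: eq_bigr => i _; rewrite mulSn.
have {IH} := IH (fun i => c i.+1) (fun i lt_iE => c_ge3 i.+1 lt_iE) => /=.
case: E c_ge3 => [|E] c_ge3 IHc.
  by rewrite !big_geq //; case: (c 0) => [|[|x]]; nia.
have := c_ge3 0 isT; nia.
Qed.

Lemma sum_over_fibers (T : finType) (d : T -> nat) (F : nat -> nat) (m : nat) :
  (forall u, d u < m) ->
  \sum_(u : T) F (d u) = \sum_(0 <= i < m) F i * #|[set u | d u == i]|.
Proof.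
move=> d_lt.
have fiber i : F i * #|[set u | d u == i]| = \sum_(u : T) (d u == i) * F i.
  rewrite -sum1_card big_distrr /= big_mkcond /=.
  by apply: eq_bigr => u _; rewrite inE; case: (d u == i); rewrite ?muln1 ?mul1n.
rewrite (eq_bigr _ (fun i _ => fiber i)) exchange_big /=.
apply: eq_bigr => u _.
rewrite (bigD1_seq (d u)) ?mem_iota ?iota_uniq //= ?add0n ?subn0 ?d_lt //.
rewrite eqxx mul1n big1 ?addn0 // => i.
by rewrite eq_sym => /negbTE ->.
Qed.

Section Levels.

Variables (T : finType) (e : rel T) (S : {set T}).

Lemma distS_le_ecc (u : T) : distS e S u <= ecc e S.
Proof. exact: (leq_bigmax (F := distS e S)). Qed.

Lemma sum_by_level (F : nat -> nat) :
  \sum_(u : T) F (distS e S u) =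
  \sum_(0 <= i < (ecc e S).+1) F i * #|level e S i|.
Proof. by apply: sum_over_fibers => u; rewrite ltnS distS_le_ecc. Qed.

Lemma level0 : 0 < #|T| -> level e S 0 = S.
Proof.
move=> T_gt0; apply/setP => u; rewrite inE /distS.
case: #|T| T_gt0 => [|k] //= _.
case: ifPn => [/existsP [v /andP [vS /eqP <-]] | /existsP noS]; first by rewrite vS.
by apply/esym/negP => uS; apply: noS; exists u; rewrite uS eqxx.
Qed.

End Levels.

Theorem lemma8 (n s : nat) (T : finType) (e : rel T) (S : {set T}) :
  1 <= n -> 1 <= s ->
  symmetric e -> irreflexive e -> connected_graph e ->
  #|T| = n + s -> #|S| = s ->
  (forall i, 1 <= i < ecc e S -> 3 <= #|level e S i|) ->
  6 * status e S <= n ^ 2 + 3 * n + 2.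
Proof.
move=> n_gt0 _ _ _ _ cardT cardS level_ge3.
set c := fun i => #|level e S i.+1|.
have status_levels : status e S = \sum_(0 <= i < ecc e S) i.+1 * c i.
  by rewrite /status (sum_by_level _ e S id) big_nat_recl.
have n_levels : n = \sum_(0 <= i < ecc e S) c i.
  have := sum_by_level _ e S (fun=> 1).
  rewrite sum1_card big_nat_recl // (level0 _ e S) ?cardT ?addn_gt0 ?n_gt0 // cardS.
  under eq_bigr do rewrite mul1n.
  by rewrite mul1n /c; lia.
have := weighted_sum_bound c (ecc e S) (fun i lt_i => level_ge3 i.+1 lt_i).
by rewrite -status_levels -n_levels; nia.
Qed.
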